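(* Let $t=(t_1:t_2:t_3)\in C^0(k)$ and let $U_3(\mathbb F_p)=\{A\in\mathrm{GL}_3(\mathbb F_{p^2}):A^TA^{(p)}=\mathbb I_3\}$. Via the map $A\mapsto\alpha_A$ (where $A\cdot t=\alpha_At$): (1) if $t\notin C(\mathbb F_{p^6})$, then $\mathrm{End}(t)\cap U_3(\mathbb F_p)\simeq\{\alpha\in\mathbb F_{p^2}:\alpha^{p+1}=1\}$; (2) if $t\in C(\mathbb F_{p^6})$, then $\mathrm{End}(t)\cap U_3(\mathbb F_p)\simeq\{\alpha\in\mathbb F_{p^6}:\alpha^{p^3+1}=1\}$.
   Context: $k$ is algebraically closed of characteristic $p$, $C\subset\mathbb P^2$ is the Fermat curve $X_1^{p+1}+X_2^{p+1}+X_3^{p+1}=0$, $C^0=C\setminus C(\mathbb F_{p^2})$, $A^{(p)}$ is obtained by raising entries to the $p$-th power, and $\mathrm{End}(t)=\{A\in\mathrm{Mat}_3(\mathbb F_{p^2}):A\cdot t\in k\cdot t\}$ for $t$ viewed as a column vector. *)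

From HB Require Import structures.
From mathcomp Require Import all_boot all_order all_algebra.
Set Implicit Arguments. Unset Strict Implicit. Unset Printing Implicit Defensive.
Import GRing.Theory.
Local Open Scope ring_scope.

Definition inFq (k : fieldType) (p n : nat) (x : k) : Prop := x ^+ (p ^ n) = x.

(* t (a nonzero column vector, i.e. a representative of a point of P^2(k))
   lies on the Fermat curve X1^{p+1}+X2^{p+1}+X3^{p+1}=0 *)
Definition onFermat (k : fieldType) (p : nat) (t : 'cV[k]_3) : Prop :=
  t != 0 /\ \sum_(i < 3) (t i 0) ^+ p.+1 = 0.

Definition ratPt (k : fieldType) (p n : nat) (t : 'cV[k]_3) : Prop :=
  exists s : 'cV[k]_3, [/\ s != 0, forall i, inFq p n (s i 0) & exists c : k, t = c *: s].

Definition inEnd (k : fieldType) (p : nat) (t : 'cV[k]_3) (A : 'M[k]_3) : Prop :=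
  (forall i j, inFq p 2 (A i j)) /\ exists a : k, A *m t = a *: t.

Definition inU3 (k : fieldType) (p : nat) (A : 'M[k]_3) : Prop :=
  [/\ forall i j, inFq p 2 (A i j), A \in unitmx &
      A^T *m map_mx (fun x => x ^+ p) A = 1%:M].

(* "End(t) ∩ U_3(F_p) is in bijection with S via A |-> alpha_A, where A t = alpha_A t" *)
Definition alpha_bij (k : fieldType) (p : nat) (t : 'cV[k]_3) (S : k -> Prop) : Prop :=
  [/\ (forall A a, inEnd p t A -> inU3 p A -> A *m t = a *: t -> S a),
      (forall A B a, inEnd p t A -> inU3 p A -> inEnd p t B -> inU3 p B ->
          A *m t = a *: t -> B *m t = a *: t -> A = B) &
      (forall a, S a -> exists A, [/\ inEnd p t A, inU3 p A & A *m t = a *: t])].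

(* The frame [T = (t, t^(p^2), t^(p^4))] of a point [t] of the Fermat curve is
   invertible: the Fermat equation kills five entries of the Gram matrix
   [G = T^T T^(p)], and the other three are Frobenius twists of
   [g = sum t_i t_i^(p^3)], which vanishes only when [t] and [t^(p^2)] span a
   plane isotropic for [u^T v^(p)], i.e. when [t] is F_{p^2}-rational.
   A matrix [A] over F_{p^2} with [A t = a t] satisfies
   [A T = T diag(a, a^(p^2), a^(p^4))], so [A] is determined by [a], and [A] is
   unitary iff this diagonal matrix preserves [G], i.e. iff [a^(p^3+1) = 1]
   (granted [G_02 = 0], which holds when [t] is F_{p^6}-rational).
   If [a^(p^2) <> a] then [t^(p^6)] is an [a]-eigenvector of [A], hence
   proportional to [t], so [t] is F_{p^6}-rational. Conversely, scalar matrices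
   realise the case [t] not F_{p^6}-rational, and [T diag(..) T^-1] the other. *)

From HB Require Import structures.
From mathcomp Require Import all_boot all_order all_algebra.
From mathcomp Require Import ring.
Import GRing.Theory.
Local Open Scope ring_scope.
Set Implicit Arguments. Unset Strict Implicit.

Section FrobeniusPower.

Variables (k : fieldType) (p : nat).
Hypothesis pchar_p : p \in [pchar k].

Lemma pchar_nat_expn n : [pchar k].-nat (p ^ n)%N.
Proof. by rewrite (eq_pnat _ (pcharf_eq pchar_p)) pnatX pnat_id ?(pcharf_prime pchar_p). Qed.

Lemma frobD n (x y : k) : (x + y) ^+ (p ^ n) = x ^+ (p ^ n) + y ^+ (p ^ n).
Proof. exact/exprDn_pchar/pchar_nat_expn. Qed.

Lemma frobB n (x y : k) : (x - y) ^+ (p ^ n) = x ^+ (p ^ n) - y ^+ (p ^ n).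
Proof. by rewrite frobD exprNn_pchar ?pchar_nat_expn. Qed.

Lemma frob0 n : 0 ^+ (p ^ n) = 0 :> k.
Proof. by rewrite expr0n expn_eq0 -[p == 0%N]negbK -lt0n prime_gt0 ?(pcharf_prime pchar_p). Qed.

Lemma frob_sum n (I : Type) (r : seq I) (P : pred I) (F : I -> k) :
  (\sum_(i <- r | P i) F i) ^+ (p ^ n) = \sum_(i <- r | P i) F i ^+ (p ^ n).
Proof. exact: (big_morph _ (frobD n) (frob0 n)). Qed.

Lemma frob_inj n : injective (fun x : k => x ^+ (p ^ n)).
Proof.
by move=> x y /eqP; rewrite -subr_eq0 -frobB expf_eq0 subr_eq0 => /andP[_ /eqP].
Qed.

Lemma map_frob_mxM m n l (A : 'M[k]_(m, n)) (B : 'M[k]_(n, l)) :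
  map_mx (fun x => x ^+ p) (A *m B) =
  map_mx (fun x => x ^+ p) A *m map_mx (fun x => x ^+ p) B.
Proof. exact: (map_mxM (pFrobenius_aut pchar_p)). Qed.

End FrobeniusPower.

Lemma exprXnXn (R : pzSemiRingType) (p a b : nat) (x : R) :
  (x ^+ (p ^ a)) ^+ (p ^ b) = x ^+ (p ^ (a + b)).
Proof. by rewrite -exprM -expnD. Qed.

Lemma inFqM (k : fieldType) (p n m : nat) (x : k) : inFq p n x -> inFq p (n * m) x.
Proof.
rewrite /inFq => xn; elim: m => [|m IHm]; first by rewrite muln0 expn0 expr1.
by rewrite mulnS expnD exprM xn IHm.
Qed.

Definition dot3 (R : pzSemiRingType) (x y : 'I_3 -> R) : R := \sum_(i < 3) x i * y i.

Definition minor2 (R : pzRingType) (x y : 'I_3 -> R) (i j : 'I_3) : R :=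
  x i * y j - x j * y i.

Lemma ord3P (P : 'I_3 -> Prop) : P 0 -> P 1 -> P 2 -> forall i, P i.
Proof.
move=> P0 P1 P2 [[|[|[|m]]] lt_m3] //.
- by rewrite (_ : Ordinal _ = 0) //; apply: val_inj.
- by rewrite (_ : Ordinal _ = 1) //; apply: val_inj.
- by rewrite (_ : Ordinal _ = 2) //; apply: val_inj.
Qed.

Lemma sum3E (R : nmodType) (F : 'I_3 -> R) : \sum_(i < 3) F i = F 0 + F 1 + F 2.
Proof.
rewrite !big_ord_recr big_ord0 /= add0r.
by congr (_ + _ + _); apply/f_equal/val_inj.
Qed.

Lemma dot3E (R : pzSemiRingType) (x y : 'I_3 -> R) :
  dot3 x y = x 0 * y 0 + x 1 * y 1 + x 2 * y 2.
Proof. exact: sum3E. Qed.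

Lemma dot3_rot (R : pzSemiRingType) (x y : 'I_3 -> R) :
  dot3 (fun i => x (i + 1)) (fun i => y (i + 1)) = dot3 x y.
Proof. by rewrite /dot3 [RHS](reindex_inj (addIr 1)). Qed.

Lemma minor2C (R : pzRingType) (x y : 'I_3 -> R) i j : minor2 x y j i = - minor2 x y i j.
Proof. by rewrite /minor2 opprB. Qed.

Section OrthogonalMinor.

Variables (R : comPzRingType) (x y X Y : 'I_3 -> R).

(* [d] encodes the cross product [X × Y], and [e u] is [u × d] expanded by
   Lagrange's identity, so it vanishes when [u] is orthogonal to [X] and [Y]. *)
Lemma minor12_orthogonal_expansion :
  let d := minor2 X Y in
  let e u V := X V * dot3 u Y - Y V * dot3 u X in
  d 1 2 ^+ 2 * minor2 x y 1 2 =
    x 0 * (d 2 0 * e y 1 + d 0 1 * e y 2) - y 0 * (d 2 0 * e x 1 + d 0 1 * e x 2)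
    + e x 1 * e y 2 - e x 2 * e y 1.
Proof. by rewrite /= /minor2 !dot3E; ring. Qed.

Hypotheses (xX : dot3 x X = 0) (xY : dot3 x Y = 0) (yX : dot3 y X = 0) (yY : dot3 y Y = 0).

Lemma minor12_orthogonal : minor2 X Y 1 2 ^+ 2 * minor2 x y 1 2 = 0.
Proof.
by rewrite minor12_orthogonal_expansion /= xX xY yX yY !(mulr0, subr0, addr0).
Qed.

End OrthogonalMinor.

Lemma minor_orthogonal (R : comPzRingType) (x y X Y : 'I_3 -> R) :
  dot3 x X = 0 -> dot3 x Y = 0 -> dot3 y X = 0 -> dot3 y Y = 0 ->
  forall i j, minor2 X Y i j ^+ 2 * minor2 x y i j = 0.
Proof.
have rot1 : 1 + 1 = 2 :> 'I_3 by apply: val_inj.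
have rot2 : 2 + 1 = 0 :> 'I_3 by apply: val_inj.
pose rot (u : 'I_3 -> R) i := u (i + 1).
have m20 (x' y' X' Y' : 'I_3 -> R) : dot3 x' X' = 0 -> dot3 x' Y' = 0 -> dot3 y' X' = 0 ->
    dot3 y' Y' = 0 -> minor2 X' Y' 2 0 ^+ 2 * minor2 x' y' 2 0 = 0.
  have := @minor12_orthogonal _ (rot x') (rot y') (rot X') (rot Y').
  by rewrite /rot !dot3_rot /minor2 rot1 rot2.
move=> xX xY yX yY.
have m12 := minor12_orthogonal xX xY yX yY.
have m01 : minor2 X Y 0 1 ^+ 2 * minor2 x y 0 1 = 0.
  have := m20 (rot x) (rot y) (rot X) (rot Y).
  by rewrite /rot !dot3_rot /minor2 rot2 add0r; apply.
have diag i : minor2 x y i i = 0 by rewrite /minor2 mulrC subrr.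
have swap i j : minor2 X Y i j ^+ 2 * minor2 x y i j = 0 ->
    minor2 X Y j i ^+ 2 * minor2 x y j i = 0.
  by rewrite !(minor2C _ _ i j) sqrrN mulrN => ->; rewrite oppr0.
have m20xy := m20 _ _ _ _ xX xY yX yY.
by apply: ord3P; apply: ord3P; rewrite ?diag ?mulr0 //; apply: swap.
Qed.

Lemma frob_isotropic_minor (k : fieldType) (p : nat) (x y : 'I_3 -> k) :
  p \in [pchar k] ->
  dot3 x (fun i => x i ^+ p) = 0 -> dot3 x (fun i => y i ^+ p) = 0 ->
  dot3 y (fun i => x i ^+ p) = 0 -> dot3 y (fun i => y i ^+ p) = 0 ->
  forall i j, minor2 x y i j = 0.
Proof.
move=> pchar_p xx xy yx yy i j; have := minor_orthogonal xx xy yx yy i j.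
have -> : minor2 (fun i => x i ^+ p) (fun i => y i ^+ p) i j = minor2 x y i j ^+ p.
  by rewrite /minor2 -[in RHS](expn1 p) frobB // expn1 !exprMn.
have [//|m_neq0] := eqVneq (minor2 x y i j) 0.
by move/eqP; rewrite mulf_eq0 !expf_eq0 (negbTE m_neq0) !andbF.
Qed.

Lemma minor2_eq0_proportional (k : fieldType) (x y : 'I_3 -> k) i :
  x i != 0 -> (forall j, minor2 x y i j = 0) -> forall j, y j = y i / x i * x j.
Proof.
move=> xi0 xy0 j; have /eqP := xy0 j; rewrite subr_eq0 => /eqP xyj.
by rewrite mulrAC [y i * _]mulrC -xyj mulrC mulKf.
Qed.

Definition frob_dot (k : fieldType) (p : nat) (t : 'cV[k]_3) (m n : nat) : k :=
  \sum_(i < 3) t i 0 ^+ (p ^ m) * t i 0 ^+ (p ^ n).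

Definition frame_mx (k : fieldType) (p : nat) (t : 'cV[k]_3) : 'M[k]_3 :=
  \matrix_(i, j) t i 0 ^+ (p ^ (2 * j)).

Definition gram_mx (k : fieldType) (p : nat) (t : 'cV[k]_3) : 'M[k]_3 :=
  (frame_mx p t)^T *m map_mx (fun x => x ^+ p) (frame_mx p t).

Section Frame.

Variables (k : fieldType) (p : nat).
Implicit Types (t : 'cV[k]_3) (A : 'M[k]_3) (a : k).

Lemma frob_dotC t m n : frob_dot p t m n = frob_dot p t n m.
Proof. by apply: eq_bigr => i _; rewrite mulrC. Qed.

Lemma gram_mxE t i j : gram_mx p t i j = frob_dot p t (2 * i) (2 * j).+1.
Proof. by rewrite mxE; apply: eq_bigr => l _; rewrite !mxE -exprM -expnSr. Qed.

Lemma gram_mxZ a t i j :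
  gram_mx p (a *: t) i j = a ^+ (p ^ (2 * i)) * a ^+ (p ^ (2 * j).+1) * gram_mx p t i j.
Proof.
rewrite !gram_mxE mulr_sumr; apply: eq_bigr => l _.
by rewrite !mxE !exprMn mulrACA.
Qed.

Lemma frame_mxZ a t :
  frame_mx p (a *: t) = frame_mx p t *m diag_mx (\row_j a ^+ (p ^ (2 * j))).
Proof. by rewrite mul_mx_diag; apply/matrixP => i j; rewrite !mxE exprMn mulrC. Qed.

Hypothesis pchar_p : p \in [pchar k].

Lemma frob_dot_shift t l m n : frob_dot p t (l + m) (l + n) = frob_dot p t m n ^+ (p ^ l).
Proof.
rewrite /frob_dot frob_sum //; apply: eq_bigr => i _.
by rewrite exprMn !exprXnXn ![(_ + l)%N]addnC.
Qed.

Lemma frame_mxM A t : (forall i j, inFq p 2 (A i j)) ->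
  A *m frame_mx p t = frame_mx p (A *m t).
Proof.
move=> A_Fp2; apply/matrixP => i j; rewrite !mxE frob_sum //; apply: eq_bigr => l _.
by rewrite !mxE exprMn (inFqM j (A_Fp2 i l)).
Qed.

Lemma gram_mxM A t : (forall i j, inFq p 2 (A i j)) ->
  gram_mx p (A *m t) =
  (frame_mx p t)^T *m (A^T *m map_mx (fun x => x ^+ p) A)
    *m map_mx (fun x => x ^+ p) (frame_mx p t).
Proof. by move=> A_Fp2; rewrite /gram_mx -frame_mxM // trmx_mul map_frob_mxM // !mulmxA. Qed.

End Frame.

Lemma unitmx3_cyclic (k : fieldType) (G : 'M[k]_3) :
  G 0 0 = 0 -> G 1 0 = 0 -> G 1 1 = 0 -> G 2 1 = 0 -> G 2 2 = 0 ->
  G 0 1 != 0 -> G 1 2 != 0 -> G 2 0 != 0 -> G \in unitmx.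
Proof.
move=> G00 G10 G11 G21 G22 G01 G12 G20.
pose Ginv : 'M[k]_3 := \matrix_(i, j) nth 0 (nth [::] [::
  [:: 0; 0; (G 2 0)^-1];
  [:: (G 0 1)^-1; - G 0 2 / (G 0 1 * G 1 2); 0];
  [:: 0; (G 1 2)^-1; 0]] i) j.
suff /mulmx1_unit[] : G *m Ginv = 1%:M by [].
apply/matrixP; apply: ord3P; apply: ord3P;
  rewrite mxE sum3E /Ginv !mxE /= ?G00 ?G10 ?G11 ?G21 ?G22;
  by field; rewrite ?G01 ?G12 ?G20.
Qed.

Lemma ratPt_of_frob (k : fieldType) (p n : nat) (t : 'cV[k]_3) (l : k) :
  t != 0 -> (forall i, t i 0 ^+ (p ^ n) = l * t i 0) -> ratPt p n t.
Proof.
move=> /cV0Pn[i ti0] tl; have l0 : l != 0.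
  by apply: contraNneq ti0 => l0; have /eqP := tl i; rewrite l0 mul0r expf_eq0 => /andP[].
exists ((t i 0)^-1 *: t); split.
- by rewrite scaler_eq0 negb_or invr_eq0 ti0; apply/cV0Pn; exists i.
- by move=> j; rewrite /inFq mxE exprMn exprVn !tl invfM mulrACA mulVf ?mul1r.
- by exists (t i 0); rewrite scalerA divff // scale1r.
Qed.

Lemma frame_mx_inj (k : fieldType) (p : nat) : injective (@frame_mx k p).
Proof.
move=> v w /matrixP vw; apply/matrixP => i j; rewrite (ord1 j).
by have := vw i 0; rewrite !mxE expn0 !expr1.
Qed.

Lemma frame_mx_frob2 (k : fieldType) (p : nat) (v : 'cV[k]_3) :
  (forall i, inFq p 6 (v i 0)) ->
  forall i j, frame_mx p v i j ^+ (p ^ 2) = frame_mx p v i (j + 1).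
Proof.
move=> v_Fp6 i; apply: ord3P; rewrite !mxE exprXnXn //.
have -> : 2 + 1 = 0 :> 'I_3 by apply: val_inj.
by rewrite v_Fp6 expn0 expr1.
Qed.

(* The [p^2]-power map rotates the columns of both frames, so [A] and its
   entrywise [p^2]-power agree on [frame_mx p v]. *)
Lemma frame_mx_div_Fp2 (k : fieldType) (p : nat) (v w : 'cV[k]_3) :
  p \in [pchar k] -> (forall i, inFq p 6 (v i 0)) -> (forall i, inFq p 6 (w i 0)) ->
  frame_mx p v \in unitmx ->
  forall i j, inFq p 2 ((frame_mx p w *m invmx (frame_mx p v)) i j).
Proof.
move=> pchar_p v_Fp6 w_Fp6 Vu; set A := _ *m _.
have AV : A *m frame_mx p v = frame_mx p w by rewrite mulmxKV.
suff /matrixP A_Fp2 : map_mx (fun x => x ^+ (p ^ 2)) A = A.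
  by move=> i j; have := A_Fp2 i j; rewrite mxE.
apply: (can_inj (mulmxK Vu)); rewrite /= AV; apply/matrixP => i j.
rewrite -[j](subrK 1) -frame_mx_frob2 // -AV !mxE frob_sum //; apply: eq_bigr => l _.
by rewrite mxE exprMn frame_mx_frob2.
Qed.

Lemma frob_norm (R : comPzRingType) (p m : nat) (a : R) :
  a ^+ (p ^ 3).+1 = 1 -> a ^+ (p ^ m) * a ^+ (p ^ (m + 3)) = 1.
Proof. by move=> a_norm; rewrite addnC -exprXnXn -exprMn -exprS a_norm expr1n. Qed.

Lemma frob6_of_norm (R : comPzRingType) (p : nat) (a : R) :
  a ^+ (p ^ 3).+1 = 1 -> a ^+ (p ^ 6) = a.
Proof.
move=> a_norm; have a3 := frob_norm 3 a_norm; rewrite exprS in a_norm.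
by rewrite -[LHS]mul1r -a_norm -mulrA a3 mulr1.
Qed.

Section FermatPoint.

Variables (k : fieldType) (p : nat) (t : 'cV[k]_3).
Hypotheses (pchar_p : p \in [pchar k]) (t_fermat : onFermat p t) (t_irrat2 : ~ ratPt p 2 t).

Lemma fermat_frob_dot m : frob_dot p t m m.+1 = 0.
Proof.
have [_ t_sum] := t_fermat.
rewrite -[m]addn0 -addnS frob_dot_shift // -[RHS](frob0 pchar_p m) -t_sum.
by congr (_ ^+ _); apply: eq_bigr => i _; rewrite expn0 expn1 expr1 exprS.
Qed.

Lemma gram_mx_eq0 (i j : 'I_3) :
  (i == j :> nat) || (i == j.+1 :> nat) -> gram_mx p t i j = 0.
Proof.
rewrite gram_mxE => /orP[] /eqP ->; first exact: fermat_frob_dot.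
by rewrite frob_dotC mulnS fermat_frob_dot.
Qed.

Lemma gram_mx01_neq0 : gram_mx p t 0 1 != 0.
Proof.
apply/eqP => g0; have [/cV0Pn[i ti0] _] := t_fermat; apply: t_irrat2.
pose x i : k := t i 0; pose y i : k := t i 0 ^+ (p ^ 2).
have frobXn m (z : k) : (z ^+ (p ^ m)) ^+ p = z ^+ (p ^ m.+1) by rewrite -exprM -expnSr.
have xx : dot3 x (fun i => x i ^+ p) = 0.
  by rewrite -(fermat_frob_dot 0); apply: eq_bigr => l _; rewrite expn0 expn1 expr1.
have xy : dot3 x (fun i => y i ^+ p) = 0.
  by rewrite -g0 gram_mxE; apply: eq_bigr => l _; rewrite frobXn expn0 expr1.
have yx : dot3 y (fun i => x i ^+ p) = 0.
  by rewrite -(fermat_frob_dot 1) frob_dotC; apply: eq_bigr => l _; rewrite expn1.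
have yy : dot3 y (fun i => y i ^+ p) = 0.
  by rewrite -(fermat_frob_dot 2); apply: eq_bigr => l _; rewrite frobXn.
have := minor2_eq0_proportional ti0 (frob_isotropic_minor pchar_p xx xy yx yy i).
by apply: ratPt_of_frob; case: t_fermat.
Qed.

Lemma gram_mx_unit : gram_mx p t \in unitmx.
Proof.
have gram12 : gram_mx p t 1 2 = gram_mx p t 0 1 ^+ (p ^ 2).
  by rewrite !gram_mxE -frob_dot_shift.
have gram20 : gram_mx p t 2 0 = gram_mx p t 0 1 ^+ (p ^ 1).
  by rewrite !gram_mxE frob_dotC -frob_dot_shift // frob_dotC.
apply: unitmx3_cyclic; try by apply: gram_mx_eq0.
- exact: gram_mx01_neq0.
- by rewrite gram12 expf_neq0 // gram_mx01_neq0.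
- by rewrite gram20 expf_neq0 // gram_mx01_neq0.
Qed.

Lemma frame_mx_unit : frame_mx p t \in unitmx.
Proof. by have := gram_mx_unit; rewrite unitmx_mul unitmx_tr => /andP[]. Qed.

Lemma map_frame_mx_unit : map_mx (fun x => x ^+ p) (frame_mx p t) \in unitmx.
Proof. by have := gram_mx_unit; rewrite unitmx_mul => /andP[]. Qed.

Section Eigen.

Variables (A : 'M[k]_3) (a : k).
Hypotheses (A_Fp2 : forall i j, inFq p 2 (A i j)) (At : A *m t = a *: t).

Lemma unitary_iff_gram :
  A^T *m map_mx (fun x => x ^+ p) A = 1%:M <-> gram_mx p (a *: t) = gram_mx p t.
Proof.
rewrite -At gram_mxM //; split => [->|U]; first by rewrite mulmx1.
have Tu := map_frame_mx_unit; have TTu : (frame_mx p t)^T \in unitmx.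
  by rewrite unitmx_tr frame_mx_unit.
apply: (can_inj (mulKmx TTu)); apply: (can_inj (mulmxK Tu)).
by rewrite /= mulmx1 U.
Qed.

Lemma eigen_norm : A^T *m map_mx (fun x => x ^+ p) A = 1%:M -> a ^+ (p ^ 3).+1 = 1.
Proof.
move=> /unitary_iff_gram /(congr1 (fun G : 'M_3 => G 0 1)) /eqP.
rewrite gram_mxZ -subr_eq0 -{2}[gram_mx p t 0 1]mul1r -mulrBl mulf_eq0.
by rewrite (negbTE gram_mx01_neq0) orbF subr_eq0 expn0 expr1 -exprS => /eqP.
Qed.

Lemma eigen_inj (B : 'M[k]_3) : (forall i j, inFq p 2 (B i j)) -> B *m t = a *: t -> B = A.
Proof.
move=> B_Fp2 Bt; have Tu := frame_mx_unit.
by rewrite -(mulmxK Tu A) -(mulmxK Tu B) !frame_mxM // At Bt.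
Qed.

(* In the basis given by the frame, [A] is [diag(a, a^(p^2), a^(p^4))]; the
   [a]-eigenvector [t^(p^6)] therefore has no component along [t^(p^2)] and
   [t^(p^4)]. *)
Lemma eigen_ratPt6 : a ^+ (p ^ 6) = a -> a ^+ (p ^ 2) != a -> ratPt p 6 t.
Proof.
move=> a6 a2; have a4 : a ^+ (p ^ 4) != a.
  by apply: contra a2 => /eqP a4; rewrite -[X in _ == X]a6 -(exprXnXn p 4 2) a4.
pose u := map_mx (fun x => x ^+ (p ^ 6)) t.
have Au : A *m u = a *: u.
  apply/matrixP => i j; have /matrixP/(_ i j) := congr1 (map_mx (fun x => x ^+ (p ^ 6))) At.
  rewrite !mxE frob_sum // exprMn a6 => <-; apply: eq_bigr => l _.
  by rewrite !mxE exprMn (inFqM 3 (A_Fp2 i l)).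
have Tu := frame_mx_unit; pose c := invmx (frame_mx p t) *m u.
have Tc : frame_mx p t *m c = u by rewrite mulKVmx.
clearbody c.
have Dc : diag_mx (\row_j a ^+ (p ^ (2 * j))) *m c = a *: c.
  apply: (can_inj (mulKmx Tu)).
  by rewrite /= mulmxA -frame_mxZ -At -frame_mxM // -mulmxA Tc Au -scalemxAr Tc.
have c0 (j : 'I_3) : a ^+ (p ^ (2 * j)) != a -> c j 0 = 0.
  move=> aj; have := congr1 (fun M : 'cV_3 => M j 0) Dc; rewrite mul_diag_mx !mxE => /eqP.
  by rewrite -subr_eq0 -mulrBl mulf_eq0 subr_eq0 (negbTE aj) => /eqP.
apply: (ratPt_of_frob (l := c 0 0)); first by case: t_fermat.
move=> i; have := congr1 (fun M : 'cV_3 => M i 0) Tc.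
by rewrite !mxE sum3E (c0 1 a2) (c0 2 a4) !mulr0 !addr0 => <-; rewrite mxE expn0 expr1 mulrC.
Qed.

Lemma eigen_irrat6_image : ~ ratPt p 6 t ->
  A^T *m map_mx (fun x => x ^+ p) A = 1%:M -> a ^+ (p ^ 2) = a /\ a ^+ p.+1 = 1.
Proof.
move=> t_irrat6 /eigen_norm a_norm; have a2 : a ^+ (p ^ 2) = a.
  have [//|a2] := eqVneq (a ^+ (p ^ 2)) a; case: t_irrat6.
  exact: eigen_ratPt6 (frob6_of_norm a_norm) a2.
by split=> //; rewrite -a_norm !exprS -(exprXnXn p 2 1) a2 expn1.
Qed.

End Eigen.

Section Fp6Point.

Hypothesis t_Fp6 : forall i, inFq p 6 (t i 0).

Lemma gram_mx02_eq0 : gram_mx p t 0 2 = 0.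
Proof.
apply: (frob_inj pchar_p (n := 1)); rewrite frob0 // gram_mxE -frob_dot_shift //.
rewrite -(fermat_frob_dot 0) frob_dotC; apply: eq_bigr => l _.
by rewrite t_Fp6 expn0 expr1.
Qed.

Lemma exists_unitary_eigen a : a ^+ (p ^ 3).+1 = 1 ->
  exists A, [/\ inEnd p t A, inU3 p A & A *m t = a *: t].
Proof.
move=> a_norm; have Tu := frame_mx_unit.
pose A := frame_mx p (a *: t) *m invmx (frame_mx p t).
have A_Fp2 : forall i j, inFq p 2 (A i j).
  apply: frame_mx_div_Fp2 => // i; rewrite /inFq mxE exprMn frob6_of_norm //.
  by rewrite t_Fp6.
have At : A *m t = a *: t by apply: (@frame_mx_inj k p); rewrite -frame_mxM // mulmxKV.
have U : A^T *m map_mx (fun x => x ^+ p) A = 1%:M.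
  apply/(unitary_iff_gram A_Fp2 At)/matrixP; apply: ord3P; apply: ord3P;
    rewrite gram_mxZ; try by rewrite gram_mx_eq0 ?mulr0.
  - by rewrite (frob_norm 0 a_norm) mul1r.
  - by rewrite gram_mx02_eq0 mulr0.
  - by rewrite (frob_norm 2 a_norm) mul1r.
  - by rewrite [_ * _ ^+ _]mulrC (frob_norm 1 a_norm) mul1r.
exists A; split=> //; split=> //; first by exists a.
by have [] := mulmx1_unit U; rewrite unitmx_tr.
Qed.

End Fp6Point.

End FermatPoint.

Lemma scalar_mx_unitary_eigen (k : fieldType) (p : nat) (t : 'cV[k]_3) (a : k) :
  p \in [pchar k] -> inFq p 2 a -> a ^+ p.+1 = 1 ->
  [/\ inEnd p t a%:M, inU3 p a%:M & a%:M *m t = a *: t].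
Proof.
move=> pchar_p a_Fp2 a_norm; have At : a%:M *m t = a *: t by rewrite mul_scalar_mx.
have A_Fp2 i j : inFq p 2 ((a%:M : 'M_3) i j).
  by rewrite /inFq mxE; case: (i == j); rewrite ?mulr1n ?mulr0n ?frob0.
have U : (a%:M)^T *m map_mx (fun x => x ^+ p) (a%:M : 'M_3) = 1%:M.
  rewrite tr_scalar_mx (map_scalar_mx (pFrobenius_aut pchar_p)).
  by rewrite -scalar_mxM -exprS a_norm.
split=> //; first by split=> //; exists a.
by split=> //; have [] := mulmx1_unit U; rewrite unitmx_tr.
Qed.

Lemma onFermatZ (k : fieldType) (p : nat) (c : k) (s : 'cV[k]_3) :
  c != 0 -> onFermat p (c *: s) -> onFermat p s.
Proof.
move=> c0 [cs0 cs_sum]; split; first by apply: contraNneq cs0 => ->; rewrite scaler0.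
move: cs_sum; under eq_bigr do rewrite mxE exprMn; rewrite -mulr_sumr => /eqP.
by rewrite mulf_eq0 expf_eq0 (negbTE c0) andbF => /eqP.
Qed.

Lemma ratPtZ (k : fieldType) (p n : nat) (c : k) (s : 'cV[k]_3) :
  ratPt p n s -> ratPt p n (c *: s).
Proof. by case=> r [r0 r_Fq [d ->]]; exists r; split=> //; exists (c * d); rewrite scalerA. Qed.

Lemma ratPt6_exists_unitary_eigen (k : fieldType) (p : nat) (t : 'cV[k]_3) (a : k) :
  p \in [pchar k] -> onFermat p t -> ~ ratPt p 2 t -> ratPt p 6 t ->
  a ^+ (p ^ 3).+1 = 1 -> exists A, [/\ inEnd p t A, inU3 p A & A *m t = a *: t].
Proof.
move=> pchar_p t_fermat t_irrat2 [s [s0 s_Fp6 [c tcs]]] a_norm.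
have c0 : c != 0 by apply: contraTneq t_fermat.1 => c0; rewrite tcs c0 scale0r eqxx.
have s_fermat : onFermat p s by apply: (onFermatZ c0); rewrite -tcs.
have s_irrat2 : ~ ratPt p 2 s by move/(ratPtZ c); rewrite -tcs.
have [A [[A_Fp2 _] AU As]] := exists_unitary_eigen pchar_p s_fermat s_irrat2 s_Fp6 a_norm.
have At : A *m t = a *: t by rewrite tcs -scalemxAr As !scalerA mulrC.
by exists A; split=> //; split=> //; exists a.
Qed.

Unset Implicit Arguments.

Theorem lemma5p10 (k : closedFieldType) (p : nat) (t : 'cV[k]_3) :
  prime p -> p \in [pchar k] ->
  onFermat p t -> ~ ratPt p 2 t ->
  (~ ratPt p 6 t ->
     alpha_bij p t (fun a => a ^+ (p ^ 2) = a /\ a ^+ p.+1 = 1)) /\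
  (ratPt p 6 t ->
     alpha_bij p t (fun a => a ^+ (p ^ 6) = a /\ a ^+ (p ^ 3).+1 = 1)).
Proof.
(* The primality of [p] is already implied by [p \in [pchar k]]. *)
move=> _ pchar_p t_fermat t_irrat2.
have alpha_inj A B a : inEnd p t A -> inU3 p A -> inEnd p t B -> inU3 p B ->
    A *m t = a *: t -> B *m t = a *: t -> A = B.
  move=> [A_Fp2 _] _ [B_Fp2 _] _ At Bt.
  exact/esym/(eigen_inj pchar_p t_fermat t_irrat2 A_Fp2 At B_Fp2 Bt).
split=> [t_irrat6 | t_rat6]; split=> //.
- move=> A a [A_Fp2 _] [_ _ AU] At.
  exact: (eigen_irrat6_image pchar_p t_fermat t_irrat2 A_Fp2 At t_irrat6 AU).
- by move=> a [a_Fp2 a_norm]; exists a%:M; apply: scalar_mx_unitary_eigen.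
- move=> A a [A_Fp2 _] [_ _ AU] At.
  have a_norm := eigen_norm pchar_p t_fermat t_irrat2 A_Fp2 At AU.
  by split; first exact: frob6_of_norm.
- by move=> a [_ a_norm]; apply: ratPt6_exists_unitary_eigen.
Qed.
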